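(* Fix $\alpha_1,\alpha_2>0$ and, for a variable $n>0$, let $T=\alpha_1\log n$ and $L=\alpha_2\log n$. Use either lower or upper boundary values. Then for every $\kappa>0$ there are $\alpha_3>0$ and $n_0$ such that, with $K=\alpha_3\log n$ (rounded to an integer), for every solution $\mathbf u(t)$ of the mean-field equations with $\mathbf u(0)\in[0,1]^{\mathbb Z}$ and its $K$-restriction ${}^K\mathbf u$ with ${}^Ku_x(0)=u_x(0)$ for $|x|\le K$, $$|{}^Ku_x(t)-u_x(t)|\le n^{-\kappa}\quad\text{for all }n\ge n_0,\ |x|\le L,\ t\in[0,T].$$
   Context: Fix $a,b>0$ and $M\ge1$; for $x,y\in\mathbb Z$ write $y\sim x$ iff $0<|x-y|\le M$. Mean-field equations: $u_x'=(a u_x^2+\frac{b}{2M}\sum_{y\sim x}u_y^2)(1-u_x)-u_x$, $x\in\mathbb Z$. For an integer $K\ge1$ and boundary values $\beta\in\{0,1\}$, the $K$-restriction ${}^K\mathbf u(t)=({}^Ku_x(t))_{|x|\le K}$ is the solution of the finite system ${}^Ku_x'=(a\,{}^Ku_x^2+\frac{b}{2M}\sum_{y\sim x}\tilde u_y^2)(1-{}^Ku_x)-{}^Ku_x$ for $|x|\le K$, where $\tilde u_y={}^Ku_y$ if $|y|\le K$ and $\tilde u_y=\beta$ if $|y|>K$. $\beta=0$ is called lower boundary values, $\beta=1$ upper boundary values. *)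

From Stdlib Require Import Reals ZArith Lra Lia.
Open Scope R_scope.

(* Sum over neighbours y ~ x, i.e. 0 < |x - y| <= M, of (w y)^2:
   nbr_sum M w x = sum_{k=1}^{M} (w (x+k)^2 + w (x-k)^2). *)
Fixpoint nbr_sum (M : nat) (w : Z -> R) (x : Z) : R :=
  match M with
  | O => 0
  | S k => nbr_sum k w x + (w (x + Z.of_nat (S k))%Z) ^ 2
                         + (w (x - Z.of_nat (S k))%Z) ^ 2
  end.

(* Right-hand side of the mean-field equation at site x, given the own value
   ux and the configuration w used for the neighbours. *)
Definition mf_rhs (a b : R) (M : nat) (ux : R) (w : Z -> R) (x : Z) : R :=
  (a * ux ^ 2 + b / (2 * INR M) * nbr_sum M w x) * (1 - ux) - ux.

Definition right_cont_at0 (f : R -> R) : Prop :=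
  forall eps, 0 < eps -> exists delta, 0 < delta /\
    forall t, 0 <= t < delta -> Rabs (f t - f 0) < eps.

Definition is_mf_solution (a b : R) (M : nat) (u : Z -> R -> R) : Prop :=
  forall x : Z,
    right_cont_at0 (u x) /\
    forall t, 0 < t ->
      derivable_pt_lim (u x) t (mf_rhs a b M (u x t) (fun y => u y t) x).

Definition ext_cfg (K : nat) (beta : R) (v : Z -> R -> R) (t : R) : Z -> R :=
  fun y => if (Z.abs y <=? Z.of_nat K)%Z then v y t else beta.

Definition is_restricted_solution (a b : R) (M K : nat) (beta : R)
    (v : Z -> R -> R) : Prop :=
  forall x : Z, (Z.abs x <= Z.of_nat K)%Z ->
    right_cont_at0 (v x) /\
    forall t, 0 < t ->
      derivable_pt_lim (v x) t (mf_rhs a b M (v x t) (ext_cfg K beta v t) x).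

Definition roundK (alpha3 : R) (n : nat) : nat :=
  Z.to_nat (up (alpha3 * ln (INR n))).

(* The restriction error is controlled by the weighted energy
     F(t) = sum_{|y| <= K} e^(K - |y|) (v_y(t) - u_y(t))^2.
   Both solutions stay in [0, 1], so each site contributes to F' at most a constant times its
   own term plus the weighted terms of its neighbours; the weight changes by a factor at most
   e^M between neighbours, and outside the box the weight is <= 1 and the difference is <= 1.
   Hence F' <= A F + B with F(0) = 0, so F(t) <= (B/A) e^(A t) by Gronwall.  At a site
   |x| <= L this gives (v_x - u_x)^2 <= (B/A) e^(A t - (K - |x|)), which is at most
   n^(-2 kappa) once K >= (A alpha1 + alpha2 + 2 kappa + 1) log n and n >= B/A. *)

From Stdlib Require Import Reals ZArith Lra Lia Psatz.
Open Scope R_scope.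

Lemma right_cont_at0_limit f :
  right_cont_at0 f <-> limit1_in f (fun t => 0 <= t) (f 0) 0.
Proof.
  unfold right_cont_at0, limit1_in, limit_in; simpl; unfold R_dist; split.
  - intros H eps Heps. destruct (H eps Heps) as [d [Hd Hf]].
    exists d; split; [exact Hd|]. intros t [Ht Htd].
    rewrite Rminus_0_r, Rabs_right in Htd by lra. apply Hf; lra.
  - intros H eps Heps. destruct (H eps Heps) as [d [Hd Hf]].
    exists d; split; [exact Hd|]. intros t Ht.
    apply Hf. rewrite Rminus_0_r, Rabs_right; lra.
Qed.

Lemma right_cont_at0_const c : right_cont_at0 (fun _ => c).
Proof. intros e He; exists 1; split; [lra|]; intros; rewrite Rminus_diag, Rabs_R0; lra. Qed.

Lemma right_cont_at0_plus f g :
  right_cont_at0 f -> right_cont_at0 g -> right_cont_at0 (fun t => f t + g t).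
Proof. rewrite !right_cont_at0_limit; apply limit_plus. Qed.

Lemma right_cont_at0_minus f g :
  right_cont_at0 f -> right_cont_at0 g -> right_cont_at0 (fun t => f t - g t).
Proof. rewrite !right_cont_at0_limit; apply limit_minus. Qed.

Lemma right_cont_at0_mult f g :
  right_cont_at0 f -> right_cont_at0 g -> right_cont_at0 (fun t => f t * g t).
Proof. rewrite !right_cont_at0_limit; apply limit_mul. Qed.

Lemma continuity_pt_eps f m : continuity_pt f m -> forall eps, 0 < eps ->
  exists d, 0 < d /\ forall s, Rabs (s - m) < d -> Rabs (f s - f m) < eps.
Proof.
  intros H eps Heps. destruct (H eps Heps) as [d [Hd Hf]].
  exists d; split; [exact Hd|]. intros s Hs.
  destruct (Req_dec s m) as [->|Hne].
  - rewrite Rminus_diag, Rabs_R0; lra.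
  - apply Hf. repeat split; auto.
Qed.

Lemma right_cont_at0_of_continuity f : continuity_pt f 0 -> right_cont_at0 f.
Proof.
  intros H eps Heps. destruct (continuity_pt_eps f 0 H eps Heps) as [d [Hd Hf]].
  exists d; split; [exact Hd|]. intros t Ht. apply Hf. rewrite Rminus_0_r, Rabs_right; lra.
Qed.

Section Trajectory.
Variables (f df : R -> R).
Hypothesis f_rc : right_cont_at0 f.
Hypothesis f_deriv : forall t, 0 < t -> derivable_pt_lim f t (df t).

Lemma traj_continuity t : 0 < t -> continuity_pt f t.
Proof. intros Ht. apply derivable_continuous_pt. exists (df t). apply f_deriv, Ht. Qed.

Lemma traj_right_cont m : 0 <= m -> forall eps, 0 < eps ->
  exists d, 0 < d /\ forall s, m <= s < m + d -> Rabs (f s - f m) < eps.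
Proof.
  intros Hm eps Heps. destruct (Req_dec m 0) as [->|Hne].
  - destruct (f_rc eps Heps) as [d [Hd Hf]]. exists d; split; [exact Hd|].
    intros s Hs; apply Hf; lra.
  - destruct (continuity_pt_eps f m (traj_continuity m ltac:(lra)) eps Heps) as [d [Hd Hf]].
    exists d; split; [exact Hd|]. intros s Hs. apply Hf. rewrite Rabs_right; lra.
Qed.

Lemma traj_antitone s t : 0 < s < t -> (forall r, s < r < t -> df r <= 0) -> f t <= f s.
Proof.
  intros Hst Hneg. destruct (MVT_cor2 f df s t) as [r [Hr Hrst]]; [lra| |].
  - intros r Hr; apply f_deriv; lra.
  - specialize (Hneg r Hrst). nra.
Qed.

Lemma traj_no_jump m t : 0 <= m < t -> (forall r, m < r < t -> df r <= 0) -> f t <= f m.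
Proof.
  intros Hmt Hneg. apply Rnot_lt_le; intro Hlt.
  destruct (traj_right_cont m ltac:(lra) (f t - f m) ltac:(lra)) as [d [Hd Hf]].
  set (s := Rmin (m + d / 2) ((m + t) / 2)).
  assert (Hs1 : s <= m + d / 2) by apply Rmin_l.
  assert (Hs2 : s <= (m + t) / 2) by apply Rmin_r.
  assert (Hs0 : m < s) by (apply Rmin_glb_lt; lra).
  assert (Hts : f t <= f s).
  { apply traj_antitone; [lra|]. intros r Hr; apply Hneg; lra. }
  specialize (Hf s ltac:(lra)). apply Rabs_def2 in Hf. lra.
Qed.

Lemma traj_le_initial : (forall t, 0 < t -> df t <= 0) -> forall t, 0 <= t -> f t <= f 0.
Proof.
  intros Hneg t Ht. destruct (Req_dec t 0) as [->|Hne]; [lra|].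
  apply traj_no_jump; [lra|]. intros r Hr; apply Hneg; lra.
Qed.

Lemma traj_barrier c : f 0 <= c -> (forall t, 0 < t -> c < f t -> df t <= 0) ->
  forall t, 0 <= t -> f t <= c.
Proof.
  intros H0 Hneg t1 Ht1. apply Rnot_lt_le; intro Hc1.
  set (E := fun s => 0 <= s <= t1 /\ f s <= c).
  destruct (completeness E) as [m [Hub Hlub]].
  { exists t1. intros s [Hs _]. lra. }
  { exists 0. split; lra. }
  assert (Hm0 : 0 <= m) by (apply Hub; split; lra).
  assert (Hm1 : m <= t1) by (apply Hlub; intros s [Hs _]; lra).
  assert (Habove : forall s, m < s <= t1 -> c < f s).
  { intros s Hs. apply Rnot_le_lt; intro Hle.
    assert (s <= m) by (apply Hub; split; lra). lra. }
  assert (Hfm : f m <= c).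
  { destruct (Req_dec m 0) as [->|Hne]; [exact H0|].
    apply Rnot_lt_le; intro Hlt.
    destruct (continuity_pt_eps f m (traj_continuity m ltac:(lra)) (f m - c) ltac:(lra))
      as [d [Hd Hf]].
    assert (m <= m - d / 2); [|lra].
    apply Hlub. intros s [Hs Hfs]. apply Rnot_lt_le; intro Hlt'.
    assert (s <= m) by (apply Hub; split; auto).
    specialize (Hf s ltac:(rewrite Rabs_left1; lra)). apply Rabs_def2 in Hf. lra. }
  assert (Hmt : m < t1) by (destruct (Req_dec m t1) as [->|]; lra).
  assert (f t1 <= f m); [|lra].
  apply traj_no_jump; [lra|]. intros r Hr. apply Hneg; [lra|]. apply Habove; lra.
Qed.

End Trajectory.

Lemma derivable_pt_lim_exp_scal k t :
  derivable_pt_lim (fun s => exp (k * s)) t (exp (k * t) * k).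
Proof.
  apply (derivable_pt_lim_comp (fun s => k * s) exp t k (exp (k * t))).
  - pose proof (derivable_pt_lim_scal id k t 1 (derivable_pt_lim_id t)) as Hk.
    rewrite Rmult_1_r in Hk. exact Hk.
  - apply derivable_pt_lim_exp.
Qed.

Lemma derivable_pt_lim_sq g dg t :
  derivable_pt_lim g t dg -> derivable_pt_lim (fun s => g s ^ 2) t (2 * g t * dg).
Proof.
  intros Hg. apply (derivable_pt_lim_ext (fun s => g s * g s)); [intros; ring|].
  replace (2 * g t * dg) with (dg * g t + g t * dg) by ring.
  apply (derivable_pt_lim_mult g g); exact Hg.
Qed.

(* Gronwall for F' <= A F + B: the function (F + B/A) e^(-A t) is nonincreasing. *)
Lemma gronwall_affine F D A B : 0 < A -> 0 <= B -> right_cont_at0 F -> F 0 = 0 ->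
  (forall t, 0 < t -> derivable_pt_lim F t (D t)) ->
  (forall t, 0 < t -> D t <= A * F t + B) ->
  forall t, 0 <= t -> F t <= B / A * exp (A * t).
Proof.
  intros HA HB Hrc H0 Hd Hle t Ht.
  set (G := fun s => (F s + B / A) * exp (- A * s)).
  set (dG := fun s => D s * exp (- A * s) + (F s + B / A) * (exp (- A * s) * - A)).
  assert (HBA : B / A * A = B) by (field; lra).
  assert (HG : G t <= G 0).
  { apply (traj_le_initial G dG); [| |intros s Hs; unfold dG |exact Ht].
    - apply right_cont_at0_mult.
      + apply right_cont_at0_plus; [exact Hrc | apply right_cont_at0_const].
      + apply right_cont_at0_of_continuity, derivable_continuous_pt.
        eexists; apply derivable_pt_lim_exp_scal.
    - intros s Hs. apply (derivable_pt_lim_mult (fun s => F s + B / A) (fun s => exp (- A * s))).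
      + replace (D s) with (D s + 0) by ring.
        apply derivable_pt_lim_plus; [apply Hd, Hs | apply derivable_pt_lim_const].
      + apply derivable_pt_lim_exp_scal.
    - specialize (Hle s Hs). pose proof (exp_pos (- A * s)). nra. }
  unfold G in HG. rewrite H0, Rmult_0_r, exp_0, Rplus_0_l, Rmult_1_r in HG.
  assert (Hinv : exp (- A * t) * exp (A * t) = 1).
  { rewrite <- exp_plus, <- exp_0. f_equal; ring. }
  pose proof (exp_pos (A * t)).
  assert (HBA0 : 0 <= B / A) by (apply Rmult_le_pos; [lra | left; apply Rinv_0_lt_compat, HA]).
  assert (F t + B / A <= B / A * exp (A * t)); [|nra].
  replace (F t + B / A) with ((F t + B / A) * exp (- A * t) * exp (A * t))
    by (rewrite Rmult_assoc, Hinv; ring).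
  apply Rmult_le_compat_r; lra.
Qed.

Fixpoint nbr_add (m : nat) (G : Z -> R) (x : Z) : R :=
  match m with
  | O => 0
  | S k => nbr_add k G x + G (x + Z.of_nat (S k))%Z + G (x - Z.of_nat (S k))%Z
  end.

Lemma nbr_sum_as_add m w x : nbr_sum m w x = nbr_add m (fun y => w y ^ 2) x.
Proof. induction m as [|m IH]; cbn [nbr_sum nbr_add]; [reflexivity|]. rewrite IH; reflexivity. Qed.

Lemma nbr_add_le_local m f g x :
  (forall y, (Z.abs (y - x) <= Z.of_nat m)%Z -> f y <= g y) ->
  nbr_add m f x <= nbr_add m g x.
Proof.
  induction m as [|m IH]; intros Hfg; cbn [nbr_add]; [lra|].
  assert (nbr_add m f x <= nbr_add m g x) by (apply IH; intros y Hy; apply Hfg; lia).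
  assert (f (x + Z.of_nat (S m))%Z <= g (x + Z.of_nat (S m))%Z) by (apply Hfg; lia).
  assert (f (x - Z.of_nat (S m))%Z <= g (x - Z.of_nat (S m))%Z) by (apply Hfg; lia).
  lra.
Qed.

Lemma nbr_add_scal k m G x : nbr_add m (fun y => k * G y) x = k * nbr_add m G x.
Proof. induction m as [|m IH]; cbn [nbr_add]; [ring|]. rewrite IH; ring. Qed.

Lemma nbr_sum_nonneg m w x : 0 <= nbr_sum m w x.
Proof. induction m as [|m IH]; cbn [nbr_sum]; [lra|]. nra. Qed.

Lemma mf_coef_nonneg b M : 0 <= b -> 0 <= b / (2 * INR M).
Proof.
  intros Hb. destruct M as [|M].
  - simpl. rewrite Rmult_0_r. unfold Rdiv. rewrite Rinv_0. lra.
  - apply Rmult_le_pos; [exact Hb|]. left; apply Rinv_0_lt_compat.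
    pose proof (lt_0_INR (S M) ltac:(lia)). lra.
Qed.

Lemma mf_rhs_nonpos_above_one a b M p w x :
  0 <= a -> 0 <= b -> 1 <= p -> mf_rhs a b M p w x <= 0.
Proof.
  intros Ha Hb Hp. unfold mf_rhs.
  pose proof (nbr_sum_nonneg M w x). pose proof (mf_coef_nonneg b M Hb).
  assert (0 <= a * p ^ 2 + b / (2 * INR M) * nbr_sum M w x) by (apply Rplus_le_le_0_compat; nra).
  nra.
Qed.

Lemma mf_rhs_nonneg_below_zero a b M p w x :
  0 <= a -> 0 <= b -> p <= 0 -> 0 <= mf_rhs a b M p w x.
Proof.
  intros Ha Hb Hp. unfold mf_rhs.
  pose proof (nbr_sum_nonneg M w x). pose proof (mf_coef_nonneg b M Hb).
  assert (0 <= a * p ^ 2 + b / (2 * INR M) * nbr_sum M w x) by (apply Rplus_le_le_0_compat; nra).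
  nra.
Qed.

Lemma mf_path_unit_interval a b M (f : R -> R) (W : R -> Z -> R) x :
  0 <= a -> 0 <= b -> right_cont_at0 f ->
  (forall t, 0 < t -> derivable_pt_lim f t (mf_rhs a b M (f t) (W t) x)) ->
  0 <= f 0 <= 1 -> forall t, 0 <= t -> 0 <= f t <= 1.
Proof.
  intros Ha Hb Hrc Hd H0 t Ht. split.
  - assert (- f t <= 0); [|lra].
    apply (traj_barrier (fun s => - f s) (fun s => - mf_rhs a b M (f s) (W s) x));
      [| |lra| |exact Ht].
    + revert Hrc. rewrite !right_cont_at0_limit. apply limit_Ropp.
    + intros s Hs. apply derivable_pt_lim_opp, Hd, Hs.
    + intros s Hs Hneg. pose proof (mf_rhs_nonneg_below_zero a b M (f s) (W s) x Ha Hb). lra.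
  - apply (traj_barrier f (fun s => mf_rhs a b M (f s) (W s) x)); auto; [lra|].
    intros s Hs Habove. apply mf_rhs_nonpos_above_one; lra.
Qed.

Lemma sq_diff_le d p q : 0 <= p <= 1 -> 0 <= q <= 1 ->
  2 * d * (p ^ 2 - q ^ 2) <= 2 * d ^ 2 + 2 * (p - q) ^ 2.
Proof.
  intros Hp Hq. replace (2 * d * (p ^ 2 - q ^ 2)) with (2 * (d * (p - q)) * (p + q)) by ring.
  assert (4 * (d * (p - q)) <= 2 * d ^ 2 + 2 * (p - q) ^ 2)
    by (pose proof (pow2_ge_0 (d - (p - q))); nra).
  destruct (Rle_lt_dec 0 (d * (p - q))).
  - assert (0 <= d * (p - q) * (2 - (p + q))) by (apply Rmult_le_pos; lra). nra.
  - assert (d * (p - q) * (p + q) <= 0) by nra. nra.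
Qed.

Lemma nbr_sum_diff_le m W U x d :
  (forall y, 0 <= W y <= 1) -> (forall y, 0 <= U y <= 1) ->
  2 * d * (nbr_sum m W x - nbr_sum m U x)
    <= 4 * INR m * d ^ 2 + 2 * nbr_sum m (fun y => W y - U y) x.
Proof.
  intros HW HU. induction m as [|m IH]; cbn [nbr_sum]; [simpl; lra|].
  rewrite S_INR.
  pose proof (sq_diff_le d _ _ (HW (x + Z.of_nat (S m))%Z) (HU (x + Z.of_nat (S m))%Z)).
  pose proof (sq_diff_le d _ _ (HW (x - Z.of_nat (S m))%Z) (HU (x - Z.of_nat (S m))%Z)).
  lra.
Qed.

Lemma mf_rhs_diff_le a b M p q W U x : 0 <= a -> 0 <= b -> (1 <= M)%nat ->
  0 <= p <= 1 -> 0 <= q <= 1 -> (forall y, 0 <= W y <= 1) -> (forall y, 0 <= U y <= 1) ->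
  2 * (p - q) * (mf_rhs a b M p W x - mf_rhs a b M q U x)
    <= (4 * a + 2 * b) * (p - q) ^ 2 + b / INR M * nbr_sum M (fun y => W y - U y) x.
Proof.
  intros Ha Hb HM Hp Hq HW HU. unfold mf_rhs.
  pose proof (lt_0_INR M ltac:(lia)) as HM0.
  set (c := b / (2 * INR M)).
  assert (Hc : 0 <= c) by apply (mf_coef_nonneg b M Hb).
  assert (Hc2 : b / INR M = 2 * c) by (unfold c; field; lra).
  assert (HcM : 4 * INR M * c = 2 * b) by (unfold c; field; lra).
  rewrite Hc2, <- HcM.
  set (SW := nbr_sum M W x). set (SU := nbr_sum M U x).
  set (N := nbr_sum M (fun y => W y - U y) x).
  assert (HSU : 0 <= SU) by apply nbr_sum_nonneg.
  assert (HN : 0 <= N) by apply nbr_sum_nonneg.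
  pose proof (nbr_sum_diff_le M W U x (p - q) HW HU) as HD. fold SW SU N in HD.
  set (d := p - q) in *.
  replace (2 * d * ((a * p ^ 2 + c * SW) * (1 - p) - p - ((a * q ^ 2 + c * SU) * (1 - q) - q)))
    with (2 * a * d ^ 2 * (p + q - p ^ 2 - p * q - q ^ 2) + c * (1 - p) * (2 * d * (SW - SU))
          - 2 * c * SU * d ^ 2 - 2 * d ^ 2) by (unfold d; ring).
  assert (Hd2 : 0 <= d ^ 2) by apply pow2_ge_0.
  assert (Hreact : 2 * a * d ^ 2 * (p + q - p ^ 2 - p * q - q ^ 2) <= 4 * a * d ^ 2).
  { assert (p + q - p ^ 2 - p * q - q ^ 2 <= 2) by nra.
    assert (0 <= a * d ^ 2 * (2 - (p + q - p ^ 2 - p * q - q ^ 2))) by (apply Rmult_le_pos; nra).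
    nra. }
  assert (Hnbr : c * (1 - p) * (2 * d * (SW - SU)) <= c * (4 * INR M * d ^ 2 + 2 * N)).
  { assert (0 <= 4 * INR M * d ^ 2 + 2 * N) by nra.
    assert (0 <= c * (1 - p)) by nra.
    apply Rle_trans with (c * (1 - p) * (4 * INR M * d ^ 2 + 2 * N));
      [apply Rmult_le_compat_l; lra|].
    apply Rmult_le_compat_r; nra. }
  assert (0 <= c * SU * d ^ 2) by (apply Rmult_le_pos; [apply Rmult_le_pos|]; lra).
  nra.
Qed.

Fixpoint zsum (g : Z -> R) (lo : Z) (n : nat) : R :=
  match n with O => 0 | S m => g lo + zsum g (lo + 1)%Z m end.

Lemma zsum_split g lo n m :
  zsum g lo (n + m) = zsum g lo n + zsum g (lo + Z.of_nat n)%Z m.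
Proof.
  revert lo; induction n as [|n IH]; intros lo; cbn [zsum Nat.add].
  - rewrite Z.add_0_r; ring.
  - rewrite IH. replace (lo + 1 + Z.of_nat n)%Z with (lo + Z.of_nat (S n))%Z by lia. ring.
Qed.

Lemma zsum_ext g h lo n : (forall y, (lo <= y < lo + Z.of_nat n)%Z -> g y = h y) ->
  zsum g lo n = zsum h lo n.
Proof.
  revert lo; induction n as [|n IH]; intros lo H; cbn [zsum]; [reflexivity|].
  rewrite (H lo), (IH (lo + 1)%Z); [reflexivity| |]; intros; try apply H; lia.
Qed.

Lemma zsum_le g h lo n : (forall y, (lo <= y < lo + Z.of_nat n)%Z -> g y <= h y) ->
  zsum g lo n <= zsum h lo n.
Proof.
  revert lo; induction n as [|n IH]; intros lo H; cbn [zsum]; [lra|].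
  assert (g lo <= h lo) by (apply H; lia).
  assert (zsum g (lo + 1) n <= zsum h (lo + 1) n) by (apply IH; intros; apply H; lia).
  lra.
Qed.

Lemma zsum_zero lo n : zsum (fun _ => 0) lo n = 0.
Proof. revert lo; induction n as [|n IH]; intros lo; cbn [zsum]; [reflexivity|]. rewrite IH; ring. Qed.

Lemma zsum_nonneg g lo n : (forall y, (lo <= y < lo + Z.of_nat n)%Z -> 0 <= g y) ->
  0 <= zsum g lo n.
Proof. intros H. rewrite <- (zsum_zero lo n). apply zsum_le, H. Qed.

Lemma zsum_le_length g lo n : (forall y, (lo <= y < lo + Z.of_nat n)%Z -> g y <= 1) ->
  zsum g lo n <= INR n.
Proof.
  revert lo; induction n as [|n IH]; intros lo H; cbn [zsum]; [simpl; lra|].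
  assert (g lo <= 1) by (apply H; lia).
  assert (zsum g (lo + 1) n <= INR n) by (apply IH; intros; apply H; lia).
  rewrite S_INR. lra.
Qed.

Lemma zsum_term_le g lo n y : (forall y, (lo <= y < lo + Z.of_nat n)%Z -> 0 <= g y) ->
  (lo <= y < lo + Z.of_nat n)%Z -> g y <= zsum g lo n.
Proof.
  revert lo; induction n as [|n IH]; intros lo H Hy; cbn [zsum]; [lia|].
  destruct (Z.eq_dec y lo) as [->|Hne].
  - assert (0 <= zsum g (lo + 1) n) by (apply zsum_nonneg; intros; apply H; lia). lra.
  - assert (0 <= g lo) by (apply H; lia).
    assert (g y <= zsum g (lo + 1) n) by (apply IH; [intros; apply H|]; lia). lra.
Qed.

Lemma zsum_plus g h lo n : zsum (fun y => g y + h y) lo n = zsum g lo n + zsum h lo n.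
Proof. revert lo; induction n as [|n IH]; intros lo; cbn [zsum]; [ring|]. rewrite IH; ring. Qed.

Lemma zsum_scal k g lo n : zsum (fun y => k * g y) lo n = k * zsum g lo n.
Proof. revert lo; induction n as [|n IH]; intros lo; cbn [zsum]; [ring|]. rewrite IH; ring. Qed.

Lemma zsum_translate g c lo n : zsum (fun y => g (y + c)%Z) lo n = zsum g (lo + c)%Z n.
Proof.
  revert lo; induction n as [|n IH]; intros lo; cbn [zsum]; [reflexivity|].
  rewrite IH. do 2 f_equal. lia.
Qed.

Lemma zsum_right_cont (g : Z -> R -> R) lo n :
  (forall y, (lo <= y < lo + Z.of_nat n)%Z -> right_cont_at0 (g y)) ->
  right_cont_at0 (fun t => zsum (fun y => g y t) lo n).
Proof.
  revert lo; induction n as [|n IH]; intros lo H; cbn [zsum].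
  - apply right_cont_at0_const.
  - apply (right_cont_at0_plus (g lo) (fun t => zsum (fun y => g y t) (lo + 1)%Z n)).
    + apply H; lia.
    + apply IH; intros; apply H; lia.
Qed.

Lemma zsum_derivable_pt_lim (g dg : Z -> R -> R) lo n t :
  (forall y, (lo <= y < lo + Z.of_nat n)%Z -> derivable_pt_lim (g y) t (dg y t)) ->
  derivable_pt_lim (fun s => zsum (fun y => g y s) lo n) t (zsum (fun y => dg y t) lo n).
Proof.
  revert lo; induction n as [|n IH]; intros lo H; cbn [zsum].
  - apply derivable_pt_lim_const.
  - apply (derivable_pt_lim_plus (g lo) (fun s => zsum (fun y => g y s) (lo + 1)%Z n)).
    + apply H; lia.
    + apply IH; intros; apply H; lia.
Qed.

Section ShiftedSums.
Variables (G : Z -> R) (lo : Z) (n : nat).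
Hypothesis G_nonneg : forall y, 0 <= G y.
Hypothesis G_le1_outside : forall y, (y < lo \/ lo + Z.of_nat n <= y)%Z -> G y <= 1.

(* Translating the window by k trades k inside terms for k outside terms, each <= 1. *)
Lemma zsum_shift_up_le k : zsum (fun y => G (y + Z.of_nat k)%Z) lo n <= zsum G lo n + INR k.
Proof.
  rewrite zsum_translate.
  pose proof (zsum_split G lo k n) as E1. pose proof (zsum_split G lo n k) as E2.
  rewrite Nat.add_comm, E2 in E1.
  assert (0 <= zsum G lo k) by (apply zsum_nonneg; auto).
  assert (zsum G (lo + Z.of_nat n) k <= INR k)
    by (apply zsum_le_length; intros y Hy; apply G_le1_outside; lia).
  lra.
Qed.

Lemma zsum_shift_down_le k : zsum (fun y => G (y - Z.of_nat k)%Z) lo n <= zsum G lo n + INR k.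
Proof.
  rewrite (zsum_ext _ (fun y => G (y + - Z.of_nat k)%Z)) by (intros; f_equal; lia).
  rewrite zsum_translate.
  pose proof (zsum_split G (lo + - Z.of_nat k) k n) as E1.
  pose proof (zsum_split G (lo + - Z.of_nat k) n k) as E2.
  rewrite Nat.add_comm, E2 in E1.
  replace (lo + - Z.of_nat k + Z.of_nat k)%Z with lo in E1 by lia.
  assert (0 <= zsum G (lo + - Z.of_nat k + Z.of_nat n) k) by (apply zsum_nonneg; auto).
  assert (zsum G (lo + - Z.of_nat k) k <= INR k)
    by (apply zsum_le_length; intros y Hy; apply G_le1_outside; lia).
  lra.
Qed.

Lemma zsum_nbr_add_le m :
  zsum (nbr_add m G) lo n <= 2 * INR m * (zsum G lo n + INR m).
Proof.
  induction m as [|m IH]; cbn [nbr_add].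
  - rewrite zsum_zero. simpl; lra.
  - rewrite !zsum_plus.
    pose proof (zsum_shift_up_le (S m)). pose proof (zsum_shift_down_le (S m)).
    assert (0 <= zsum G lo n) by (apply zsum_nonneg; auto).
    pose proof (pos_INR m). rewrite S_INR in *. nra.
Qed.

End ShiftedSums.

Lemma exp_le_compat x y : x <= y -> exp x <= exp y.
Proof. intros [H|H]; [left; apply exp_increasing, H | rewrite H; apply Rle_refl]. Qed.

Definition box_weight (K : nat) (y : Z) : R := exp (IZR (Z.of_nat K - Z.abs y)).

Lemma box_weight_pos K y : 0 < box_weight K y.
Proof. apply exp_pos. Qed.

Lemma box_weight_le_one K y : (Z.of_nat K < Z.abs y)%Z -> box_weight K y <= 1.
Proof. intros H. unfold box_weight. rewrite <- exp_0. apply exp_le_compat. apply IZR_le. lia. Qed.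

Lemma box_weight_shift_le K x y k : (Z.abs (x - y) <= Z.of_nat k)%Z ->
  box_weight K x <= exp (INR k) * box_weight K y.
Proof.
  intros H. unfold box_weight. rewrite <- exp_plus. apply exp_le_compat.
  rewrite INR_IZR_INZ, <- plus_IZR. apply IZR_le. lia.
Qed.

Lemma weighted_nbr_add_le K m G x : (forall y, 0 <= G y) ->
  box_weight K x * nbr_add m G x <= exp (INR m) * nbr_add m (fun y => box_weight K y * G y) x.
Proof.
  intros HG. rewrite <- !nbr_add_scal. apply nbr_add_le_local. intros y Hy.
  rewrite <- Rmult_assoc. apply Rmult_le_compat_r; [apply HG|].
  apply box_weight_shift_le. lia.
Qed.

Definition weighted_energy (K : nat) (u v : Z -> R -> R) (t : R) : R :=
  zsum (fun y => box_weight K y * (v y t - u y t) ^ 2) (- Z.of_nat K) (2 * K + 1).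

Definition energy_rate (a b : R) (M : nat) : R := 4 * a + 2 * b + 2 * b * exp (INR M).

Definition boundary_flux (b : R) (M : nat) : R := 2 * b * INR M * exp (INR M).

Lemma energy_rate_pos a b M : 0 < a -> 0 <= b -> 0 < energy_rate a b M.
Proof. intros Ha Hb. unfold energy_rate. pose proof (exp_pos (INR M)). nra. Qed.

Lemma boundary_flux_nonneg b M : 0 <= b -> 0 <= boundary_flux b M.
Proof.
  intros Hb. unfold boundary_flux. pose proof (exp_pos (INR M)). pose proof (pos_INR M).
  apply Rmult_le_pos; [apply Rmult_le_pos|]; nra.
Qed.

Lemma box_range_abs K y :
  (- Z.of_nat K <= y < - Z.of_nat K + Z.of_nat (2 * K + 1))%Z <-> (Z.abs y <= Z.of_nat K)%Z.
Proof. lia. Qed.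

Section RestrictionError.
Variables (a b : R) (M : nat) (beta : R) (K : nat) (u v : Z -> R -> R).
Hypotheses (ha : 0 < a) (hb : 0 <= b) (hM : (1 <= M)%nat) (hbeta : 0 <= beta <= 1).
Hypotheses (Hu : is_mf_solution a b M u) (Hu0 : forall x, 0 <= u x 0 <= 1).
Hypotheses (Hv : is_restricted_solution a b M K beta v)
  (Hv0 : forall x, (Z.abs x <= Z.of_nat K)%Z -> v x 0 = u x 0).

Lemma mf_solution_unit_interval y t : 0 <= t -> 0 <= u y t <= 1.
Proof.
  destruct (Hu y) as [Hrc Hd].
  apply (mf_path_unit_interval a b M (u y) (fun t z => u z t) y); auto; lra.
Qed.

Lemma restricted_solution_unit_interval y t :
  (Z.abs y <= Z.of_nat K)%Z -> 0 <= t -> 0 <= v y t <= 1.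
Proof.
  intros Hy. destruct (Hv y Hy) as [Hrc Hd].
  apply (mf_path_unit_interval a b M (v y) (ext_cfg K beta v) y); auto; [lra|].
  rewrite Hv0; auto.
Qed.

Lemma ext_cfg_unit_interval y t : 0 <= t -> 0 <= ext_cfg K beta v t y <= 1.
Proof.
  intros Ht. unfold ext_cfg. destruct (Z.abs y <=? Z.of_nat K)%Z eqn:E; [|exact hbeta].
  apply restricted_solution_unit_interval; [apply Z.leb_le, E | exact Ht].
Qed.

Let drift y t := mf_rhs a b M (v y t) (ext_cfg K beta v t) y
                 - mf_rhs a b M (u y t) (fun z => u z t) y.

Let energy_flow t :=
  zsum (fun y => box_weight K y * (2 * (v y t - u y t) * drift y t)) (- Z.of_nat K) (2 * K + 1).

Lemma weighted_energy_derivable t : 0 < t ->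
  derivable_pt_lim (weighted_energy K u v) t (energy_flow t).
Proof.
  intros Ht. unfold weighted_energy, energy_flow.
  apply (zsum_derivable_pt_lim (fun y s => box_weight K y * (v y s - u y s) ^ 2)
           (fun y s => box_weight K y * (2 * (v y s - u y s) * drift y s))).
  intros y Hy. apply box_range_abs in Hy.
  destruct (Hv y Hy) as [_ Hvd]. destruct (Hu y) as [_ Hud].
  apply (derivable_pt_lim_scal (fun s => (v y s - u y s) ^ 2)).
  apply (derivable_pt_lim_sq (fun s => v y s - u y s)).
  apply derivable_pt_lim_minus; [apply Hvd | apply Hud]; exact Ht.
Qed.

Lemma weighted_energy_right_cont : right_cont_at0 (weighted_energy K u v).
Proof.
  unfold weighted_energy.
  apply (zsum_right_cont (fun y s => box_weight K y * (v y s - u y s) ^ 2)).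
  intros y Hy. apply box_range_abs in Hy.
  destruct (Hv y Hy) as [Hvc _]. destruct (Hu y) as [Huc _].
  apply (right_cont_at0_mult (fun _ => box_weight K y)); [apply right_cont_at0_const|].
  apply (right_cont_at0_mult (fun s => v y s - u y s) (fun s => (v y s - u y s) * 1)).
  - apply right_cont_at0_minus; assumption.
  - apply (right_cont_at0_mult (fun s => v y s - u y s)); [|apply right_cont_at0_const].
    apply right_cont_at0_minus; assumption.
Qed.

Lemma weighted_energy_at0 : weighted_energy K u v 0 = 0.
Proof.
  unfold weighted_energy. transitivity (zsum (fun _ => 0) (- Z.of_nat K) (2 * K + 1));
    [|apply zsum_zero].
  apply zsum_ext. intros y Hy. apply box_range_abs in Hy. rewrite Hv0 by exact Hy. ring.
Qed.

Lemma energy_flow_site_le t y : 0 < t -> (Z.abs y <= Z.of_nat K)%Z ->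
  box_weight K y * (2 * (v y t - u y t) * drift y t)
    <= (4 * a + 2 * b) * (box_weight K y * (v y t - u y t) ^ 2)
       + b / INR M * exp (INR M)
         * nbr_add M (fun z => box_weight K z * (ext_cfg K beta v t z - u z t) ^ 2) y.
Proof.
  intros Ht Hy.
  pose proof (box_weight_pos K y) as Hw.
  pose proof (mf_rhs_diff_le a b M (v y t) (u y t) (ext_cfg K beta v t) (fun z => u z t) y
    ltac:(lra) hb hM (restricted_solution_unit_interval y t Hy ltac:(lra))
    (mf_solution_unit_interval y t ltac:(lra)) (fun z => ext_cfg_unit_interval z t ltac:(lra))
    (fun z => mf_solution_unit_interval z t ltac:(lra))) as Hsite.
  pose proof (weighted_nbr_add_le K M (fun z => (ext_cfg K beta v t z - u z t) ^ 2) y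
    (fun z => pow2_ge_0 _)) as Hnbr.
  rewrite <- nbr_sum_as_add in Hnbr.
  assert (HbM : 0 <= b / INR M)
    by (apply Rmult_le_pos; [exact hb | left; apply Rinv_0_lt_compat, lt_0_INR; lia]).
  unfold drift.
  apply Rmult_le_compat_l with (r := box_weight K y) in Hsite; [|lra].
  apply Rmult_le_compat_l with (r := b / INR M) in Hnbr; [|exact HbM].
  nra.
Qed.

(* Inside the box the extended configuration is v, so the neighbour terms add up to
   the energy itself plus at most a boundary contribution of order M^2. *)
Lemma energy_flow_le t : 0 < t ->
  energy_flow t <= energy_rate a b M * weighted_energy K u v t + boundary_flux b M.
Proof.
  intros Ht.
  set (G := fun z => box_weight K z * (ext_cfg K beta v t z - u z t) ^ 2).
  assert (HG0 : forall z, 0 <= G z).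
  { intros z. apply Rmult_le_pos; [left; apply box_weight_pos | apply pow2_ge_0]. }
  assert (HG1 : forall z, (z < - Z.of_nat K \/ - Z.of_nat K + Z.of_nat (2 * K + 1) <= z)%Z ->
                          G z <= 1).
  { intros z Hz. unfold G, ext_cfg.
    replace (Z.abs z <=? Z.of_nat K)%Z with false by (symmetry; apply Z.leb_gt; lia).
    pose proof (box_weight_le_one K z ltac:(lia)). pose proof (box_weight_pos K z).
    pose proof (mf_solution_unit_interval z t ltac:(lra)).
    assert ((beta - u z t) ^ 2 <= 1) by nra. pose proof (pow2_ge_0 (beta - u z t)). nra. }
  assert (HGE : zsum G (- Z.of_nat K) (2 * K + 1) = weighted_energy K u v t).
  { apply zsum_ext. intros z Hz. apply box_range_abs in Hz. unfold G, ext_cfg.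
    replace (Z.abs z <=? Z.of_nat K)%Z with true by (symmetry; apply Z.leb_le, Hz).
    reflexivity. }
  pose proof (zsum_nbr_add_le G _ _ HG0 HG1 M) as Hsum. rewrite HGE in Hsum.
  unfold energy_flow.
  eapply Rle_trans.
  { apply zsum_le. intros y Hy. apply energy_flow_site_le; [exact Ht | apply box_range_abs, Hy]. }
  rewrite zsum_plus, zsum_scal, (zsum_scal (b / INR M * exp (INR M)) (nbr_add M G)).
  fold (weighted_energy K u v t).
  assert (HM0 : 0 < INR M) by (apply lt_0_INR; lia). pose proof (exp_pos (INR M)).
  assert (0 <= b / INR M * exp (INR M))
    by (apply Rmult_le_pos; [apply Rmult_le_pos; [exact hb | left; apply Rinv_0_lt_compat, HM0] | lra]).
  apply Rmult_le_compat_l with (r := b / INR M * exp (INR M)) in Hsum; [|assumption].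
  replace (b / INR M * exp (INR M) * (2 * INR M * (weighted_energy K u v t + INR M)))
    with (2 * b * exp (INR M) * weighted_energy K u v t + boundary_flux b M) in Hsum
    by (unfold boundary_flux; field; lra).
  unfold energy_rate. lra.
Qed.

Lemma weighted_energy_le t : 0 <= t ->
  weighted_energy K u v t
    <= boundary_flux b M / energy_rate a b M * exp (energy_rate a b M * t).
Proof.
  apply gronwall_affine with (D := energy_flow).
  - apply energy_rate_pos; assumption.
  - apply boundary_flux_nonneg, hb.
  - apply weighted_energy_right_cont.
  - apply weighted_energy_at0.
  - apply weighted_energy_derivable.
  - apply energy_flow_le.
Qed.

Lemma restriction_error_sq_le x t : (Z.abs x <= Z.of_nat K)%Z -> 0 <= t ->
  (v x t - u x t) ^ 2 <= boundary_flux b M / energy_rate a b M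
                         * exp (energy_rate a b M * t - IZR (Z.of_nat K - Z.abs x)).
Proof.
  intros Hx Ht.
  assert (Hterm : box_weight K x * (v x t - u x t) ^ 2 <= weighted_energy K u v t).
  { apply (zsum_term_le (fun y => box_weight K y * (v y t - u y t) ^ 2)); [|apply box_range_abs, Hx].
    intros y _. apply Rmult_le_pos; [left; apply box_weight_pos | apply pow2_ge_0]. }
  pose proof (weighted_energy_le t Ht) as Henergy.
  unfold Rminus at 2. rewrite exp_plus.
  assert (Hinv : box_weight K x * exp (- IZR (Z.of_nat K - Z.abs x)) = 1).
  { unfold box_weight. rewrite <- exp_plus, Rplus_opp_r. apply exp_0. }
  pose proof (exp_pos (- IZR (Z.of_nat K - Z.abs x))).
  replace ((v x t - u x t) ^ 2)
    with (box_weight K x * (v x t - u x t) ^ 2 * exp (- IZR (Z.of_nat K - Z.abs x)))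
    by (rewrite Rmult_comm, <- Rmult_assoc, (Rmult_comm _ (box_weight K x)), Hinv; ring).
  rewrite <- Rmult_assoc. apply Rmult_le_compat_r; lra.
Qed.

End RestrictionError.

Lemma ln_nonneg x : 1 <= x -> 0 <= ln x.
Proof. intros Hx. rewrite <- ln_1. destruct Hx as [Hx|<-]; [left; apply ln_increasing; lra | lra]. Qed.

Lemma roundK_gt alpha n : 0 <= alpha * ln (INR n) ->
  alpha * ln (INR n) < IZR (Z.of_nat (roundK alpha n)).
Proof.
  intros H. unfold roundK. destruct (archimed (alpha * ln (INR n))) as [Hup _].
  rewrite Z2Nat.id; [exact Hup|]. apply le_IZR. lra.
Qed.

Lemma le_INR_of_up C n : (Z.to_nat (up C) <= n)%nat -> C <= INR n.
Proof.
  intros Hn. destruct (archimed C) as [Hup _]. pose proof (pos_INR n).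
  destruct (Z.le_gt_cases 0 (up C)) as [H0|H0].
  - apply le_INR in Hn. rewrite INR_IZR_INZ, Z2Nat.id in Hn by exact H0. lra.
  - apply IZR_lt in H0. lra.
Qed.

Lemma abs_le_Rpower_of_log_gap n C e kappa d : 1 <= n -> 0 <= C <= n ->
  e <= - (2 * kappa + 1) * ln n -> d ^ 2 <= C * exp e -> Rabs d <= Rpower n (- kappa).
Proof.
  intros Hn HC He Hd.
  set (P := Rpower n (- kappa)).
  assert (HP : 0 < P) by apply exp_pos.
  assert (HCe : C * exp e <= n * exp (- (2 * kappa + 1) * ln n)).
  { pose proof (exp_pos e). pose proof (exp_le_compat _ _ He). nra. }
  assert (HnP : n * exp (- (2 * kappa + 1) * ln n) = P ^ 2).
  { unfold P, Rpower. rewrite <- (exp_ln n) at 1 by lra.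
    replace (exp (- kappa * ln n) ^ 2) with (exp (- kappa * ln n) * exp (- kappa * ln n)) by ring.
    rewrite <- !exp_plus. f_equal. ring. }
  rewrite <- pow2_abs in Hd. pose proof (Rabs_pos d). nra.
Qed.

Theorem lemma4p7 (a b : R) (M : nat) (beta : R)
  (ha : 0 < a) (hb : 0 < b) (hM : (1 <= M)%nat) (hbeta : beta = 0 \/ beta = 1)
  (alpha1 alpha2 : R) (h1 : 0 < alpha1) (h2 : 0 < alpha2)
  (kappa : R) (hk : 0 < kappa) :
  exists alpha3 : R, 0 < alpha3 /\ exists n0 : nat,
    forall n : nat, (n0 <= n)%nat -> (0 < n)%nat ->
    forall u v : Z -> R -> R,
      is_mf_solution a b M u ->
      (forall x : Z, 0 <= u x 0 <= 1) ->
      is_restricted_solution a b M (roundK alpha3 n) beta v ->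
      (forall x : Z, (Z.abs x <= Z.of_nat (roundK alpha3 n))%Z -> v x 0 = u x 0) ->
      forall (x : Z) (t : R),
        IZR (Z.abs x) <= alpha2 * ln (INR n) ->
        0 <= t <= alpha1 * ln (INR n) ->
        Rabs (v x t - u x t) <= Rpower (INR n) (- kappa).
Proof.
  set (A := energy_rate a b M). set (B := boundary_flux b M).
  assert (HA : 0 < A) by (apply energy_rate_pos; lra).
  assert (HBA : 0 <= B / A).
  { apply Rmult_le_pos; [apply boundary_flux_nonneg; lra | left; apply Rinv_0_lt_compat, HA]. }
  assert (HA1 : 0 < A * alpha1) by (apply Rmult_lt_0_compat; assumption).
  set (alpha3 := A * alpha1 + alpha2 + 2 * kappa + 1).
  assert (Halpha3 : 0 < alpha3) by (unfold alpha3; lra).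
  exists alpha3. split; [exact Halpha3|].
  exists (Z.to_nat (up (B / A))).
  intros n Hn0 Hn u v Hu Hu0 Hv Hv0 x t Hx Ht.
  set (K := roundK alpha3 n) in *. set (L := ln (INR n)) in *.
  assert (Hn1 : 1 <= INR n) by (apply (le_INR 1); lia).
  assert (HL : 0 <= L) by (apply ln_nonneg, Hn1).
  assert (HK : alpha3 * L < IZR (Z.of_nat K)) by (apply roundK_gt; fold L; apply Rmult_le_pos; lra).
  assert (HxK : (Z.abs x <= Z.of_nat K)%Z).
  { apply le_IZR. assert (alpha2 * L <= alpha3 * L) by (apply Rmult_le_compat_r; unfold alpha3; lra).
    lra. }
  apply (abs_le_Rpower_of_log_gap (INR n) (B / A) (A * t - IZR (Z.of_nat K - Z.abs x))).
  - exact Hn1.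
  - split; [exact HBA | apply le_INR_of_up, Hn0].
  - rewrite minus_IZR. unfold alpha3 in HK. fold L.
    assert (A * t <= A * alpha1 * L) by nra. nra.
  - apply (restriction_error_sq_le a b M beta K u v); auto; [lra | lra | destruct hbeta; lra].
Qed.
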